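(* Let $G$ be a snark, let $uwv$ be a path of length two in $G$, let $N=\operatorname{Neg}(G;u,v)$, let $x\in\{u,v\}$ and $y\in V(N)$. Assume that for every edge $e$ incident with $x$ in $G$ there is an edge $f$ incident with $y$ in $G$ such that $\{e,f\}$ is an essential pair of edges of $G$. Then for any two dangling edges $e',f'$ of the $6$-pole $G-\{x,y\}$ that were formerly incident with $x$, there exists a colouring $\varphi$ of $G-\{x,y\}$ with $\varphi(e')=\varphi(f')$.
   Context: A colouring of a graph or multipole is an assignment of three colours to its edges such that edge ends meeting at any vertex have distinct colours. A snark is a connected cubic graph (loops and parallel edges allowed) with no colouring. Negator: for a snark $G$ and a path $uwv$ in $G$, $\operatorname{Neg}(G;u,v)$ is the multipole obtained by deleting $u,w,v$ from $G$ (edges to remaining vertices become dangling edges); $V(N)$ denotes its vertex set. $G-\{x,y\}$ denotes the multipole obtained by deleting the vertices $x,y$, where edges joining them to other vertices become dangling edges and an edge $xy$, if present, is kept as an isolated edge (so it is a $6$-pole). A pair $\{e,f\}$ of edges of a snark $G$ is essential if the graph $G-\{e,f\}$ (delete the two edges, keep all vertices) is colourable and, for every $2$-valent vertex $z$ of $G-\{e,f\}$, the graph obtained from $G-\{e,f\}$ by suppressing $z$ (replacing the two edges at $z$ by a single edge) is colourable. *)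

(* Graphs and multipoles (loops, parallel edges, dangling and isolated edges
   allowed) are represented by their edge ends: an edge type E (a finType),
   each edge e has two ends (e, true) and (e, false); an end is either attached
   to a vertex (Some v) or free (None).  A graph is the case where every end is
   attached.  Only the edges in a set A : {set E} are present. *)
From mathcomp Require Import all_boot.
Set Implicit Arguments. Unset Strict Implicit. Unset Printing Implicit Defensive.

Section Multipoles.
Variables (V E : finType).

Definition mpole := E -> bool -> option V.

Definition graph := E -> bool -> V.

Definition as_mpole (G : graph) : mpole := fun e b => Some (G e b).

(* c is a 3-edge-colouring of the multipole (att, A): edge ends of present
   edges meeting at a common vertex have distinct colours.  (A loop at a vertex
   gives two distinct ends at that vertex, so it is never colourable.) *)
Definition colouring (att : mpole) (A : {set E}) (c : E -> 'I_3) : Prop :=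
  forall d1 d2 : E * bool, d1 != d2 -> d1.1 \in A -> d2.1 \in A ->
    att d1.1 d1.2 != None -> att d1.1 d1.2 = att d2.1 d2.2 ->
    c d1.1 != c d2.1.

Definition colourable (att : mpole) (A : {set E}) : Prop :=
  exists c : E -> 'I_3, colouring att A c.

Definition valency (att : mpole) (A : {set E}) (z : V) : nat :=
  #|[set d : E * bool | (d.1 \in A) && (att d.1 d.2 == Some z)]|.

Definition cubic (G : graph) : Prop :=
  forall z : V, valency (as_mpole G) setT z = 3.

Definition adjacent (G : graph) : rel V :=
  fun a b => [exists e : E, exists s : bool, (G e s == a) && (G e (~~ s) == b)].

Definition connected_graph (G : graph) : Prop :=
  forall a b : V, connect (adjacent G) a b.

Definition snark (G : graph) : Prop :=
  connected_graph G /\ cubic G /\ ~ colourable (as_mpole G) setT.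

Definition path2 (G : graph) (u w v : V) : Prop :=
  [/\ u != w, w != v, u != v, adjacent G u w & adjacent G w v].

(* vertex set of the negator Neg(G;u,v) = V(G) \ {u,w,v} *)
Definition in_negator (u w v y : V) : Prop :=
  [/\ y != u, y != w & y != v].

Definition incident (G : graph) (e : E) (z : V) : Prop :=
  exists s : bool, G e s = z.

(* G - {x,y}: ends at x or y become free; all edges kept (an edge xy becomes
   an isolated edge) *)
Definition delv (G : graph) (x y : V) : mpole :=
  fun e s => if (G e s == x) || (G e s == y) then None else Some (G e s).

Definition dangling_from (G : graph) (x y : V) (e : E) : Prop :=
  exists s : bool, [/\ G e s = x, G e (~~ s) != x & G e (~~ s) != y].

(* suppression of a 2-valent vertex z whose two edge ends are d1 and d2:
   the end d1 is re-attached to the far end of d2's edge, and d2's edge is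
   removed; z is left with no edge ends. *)
Definition suppress_att (att : mpole) (d1 d2 : E * bool) : mpole :=
  fun e s => if (e, s) == d1 then att d2.1 (~~ d2.2) else att e s.

Definition suppress_set (A : {set E}) (d2 : E * bool) : {set E} := A :\ d2.1.

Definition essential (G : graph) (e f : E) : Prop :=
  let A := setT :\ e :\ f in
  [/\ e != f,
      colourable (as_mpole G) A &
      forall (z : V) (d1 d2 : E * bool),
        valency (as_mpole G) A z = 2 ->
        d1 != d2 -> d1.1 \in A -> d2.1 \in A ->
        G d1.1 d1.2 = z -> G d2.1 d2.2 = z ->
        colourable (suppress_att (as_mpole G) d1 d2) (suppress_set A d2)].

End Multipoles.

From mathcomp Require Import all_boot.
Set Implicit Arguments. Unset Strict Implicit. Unset Printing Implicit Defensive.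

(* The three ends at x belong to e', f' and a third edge g, which by hypothesis
   forms an essential pair {g, h} with an edge h at y.  In G - g - h the vertex x
   is 2-valent with ends on e' and f'; suppressing it merges e' and f' into one
   edge, so a colouring of the suppressed graph colours G - {x,y} minus g and h
   with e' and f' of equal colour.  Finally g and h each have a dangling end in
   G - {x,y}, so each can take a colour missing at its other end. *)

Lemma neq_negb (b s : bool) : b != s -> b = ~~ s.
Proof. by case: b; case: s. Qed.

Section Extension.
Variables (V E : finType) (att : mpole V E).

Definition subcubic : Prop :=
  forall z : V, #|[set d : E * bool | att d.1 d.2 == Some z]| <= 3.

Lemma attached_end (h : E) (s b : bool) :
  att h s = None -> att h b != None -> b = ~~ s.
Proof. by move=> hs; apply: contraNeq => /neq_negb->; rewrite negbK hs. Qed.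

Lemma colouring_setU1 (B : {set E}) (c : E -> 'I_3) (h : E) (s : bool) (k : 'I_3) :
  colouring att B c -> att h s = None ->
  (forall d : E * bool, d.1 \in B -> d.1 != h -> att d.1 d.2 != None ->
     att d.1 d.2 = att h (~~ s) -> c d.1 != k) ->
  colouring att (h |: B) [eta c with h |-> k].
Proof.
move=> col hs fresh [e1 b1] [e2 b2] /= ne12; rewrite !inE => B1 B2 att1 att12.
have att2 : att e2 b2 != None by rewrite -att12.
case: (eqVneq e1 h) => [e1h | e1h]; case: (eqVneq e2 h) => [e2h | e2h];
  rewrite /= ?(negbTE e1h) ?(negbTE e2h) /= in B1 B2 *.
- by subst; rewrite (attached_end hs att1) (attached_end hs att2) eqxx in ne12.
- subst e1; rewrite (attached_end hs att1) in att12.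
  by rewrite eq_sym; apply: (fresh (e2, b2)).
- subst e2; rewrite (attached_end hs att2) in att12.
  exact: (fresh (e1, b1)).
- exact: (col (e1, b1) (e2, b2)).
Qed.

Hypothesis att_subcubic : subcubic.

Lemma colouring_extend_free_end (B : {set E}) (c : E -> 'I_3) (h : E) (s : bool) :
  colouring att B c -> att h s = None ->
  exists k, colouring att (h |: B) [eta c with h |-> k].
Proof.
move=> col hs.
pose D := [set d : E * bool | [&& d.1 \in B, d.1 != h, att d.1 d.2 != None &
                                  att d.1 d.2 == att h (~~ s)]].
have cardD : #|D| < 3.
  case hz: (att h (~~ s)) => [z|]; last first.
    suff -> : D = set0 by rewrite cards0.
    by apply/setP => d; rewrite !inE hz; case: (att d.1 d.2) => [?|] /=; rewrite !andbF.
  have := att_subcubic z; rewrite (cardsD1 (h, ~~ s)) inE hz eqxx add1n => ends_z.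
  apply: leq_ltn_trans ends_z; apply/subset_leq_card/subsetP => d.
  rewrite !inE hz => /and4P [_ dh _ ->]; rewrite andbT.
  by apply: contraNneq dh => ->.
have [k _ kD] : exists2 k, k \in [set: 'I_3] & k \notin [set c d.1 | d in D].
  apply/subsetPn; apply: contraL cardD => /subset_leq_card.
  rewrite cardsT card_ord -leqNgt => le3; exact: leq_trans le3 (leq_imset_card _ _).
exists k; apply: (colouring_setU1 col hs) => d dB dh datt dz.
apply: contraNneq kD => <-; apply/imsetP; exists d => //.
by rewrite inE dB dh datt dz eqxx.
Qed.

Lemma colouring_extend_free_ends (g h : E) (t b : bool) (c : E -> 'I_3) :
  g != h -> colouring att (setT :\ g :\ h) c -> att g t = None -> att h b = None ->
  exists c', colouring att setT c' /\ forall e, e != g -> e != h -> c' e = c e.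
Proof.
move=> gh col gt hb.
have [kh colh] := colouring_extend_free_end col hb.
rewrite setD1K ?inE ?(eq_sym h) ?gh // in colh.
have [kg colg] := colouring_extend_free_end colh gt.
rewrite setD1K ?inE // in colg.
exists [eta [eta c with h |-> kh] with g |-> kg]; split=> // e eg eh /=.
by rewrite (negbTE eg) (negbTE eh).
Qed.

End Extension.

Section CubicGraph.
Variables (V E : finType) (G : graph V E).

Definition ends (z : V) : {set E * bool} := [set d | G d.1 d.2 == z].

Lemma card_ends (z : V) : cubic G -> #|ends z| = 3.
Proof. by move=> cub; rewrite -(cub z); apply: eq_card => d; rewrite !inE. Qed.

Lemma cubic_third_end (z : V) (d1 d2 : E * bool) :
  cubic G -> d1 != d2 -> G d1.1 d1.2 = z -> G d2.1 d2.2 = z ->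
  exists2 d3, d3 \notin [set d1; d2] & ends z = [set d1; d2; d3].
Proof.
move=> cub d12 d1z d2z.
have [d3 d3z d3n] : exists2 d3, d3 \in ends z & d3 \notin [set d1; d2].
  apply/subsetPn; apply: contraTN isT => /subset_leq_card.
  by rewrite card_ends // cards2 d12.
exists d3 => //; apply/eqP; rewrite eq_sym eqEcard card_ends //.
rewrite !subUset !sub1set d3z !inE d1z d2z !eqxx /=.
by rewrite setUC cardsU1 d3n cards2 d12.
Qed.

Lemma end_edge_neq (z : V) (d : E * bool) (e : E) (s : bool) :
  G d.1 d.2 = z -> G e (~~ s) != z -> d != (e, s) -> d.1 != e.
Proof.
case: d => a b /= az ez; apply: contra_neq => ae; subst a; congr (_, _).
by apply: contraNeq ez => /neq_negb <-; rewrite az eqxx.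
Qed.

Lemma dangling_from_not_incident (x y : V) (e : E) :
  x != y -> dangling_from G x y e -> ~ incident G e y.
Proof.
move=> xy [s [ex _ ey]] [b eb]; case: (eqVneq b s) => [bs | /neq_negb bs]; subst b.
  by rewrite -eb ex eqxx in xy.
by rewrite eb eqxx in ey.
Qed.

Lemma delv_attached (x y : V) (e : E) (s : bool) :
  delv G x y e s != None ->
  [/\ delv G x y e s = Some (G e s), G e s != x & G e s != y].
Proof. by rewrite /delv; case: ifP => // /negbT; rewrite negb_or => /andP[]. Qed.

Lemma subcubic_delv (x y : V) : cubic G -> subcubic (delv G x y).
Proof.
move=> cub z; rewrite -(card_ends z cub); apply/subset_leq_card/subsetP => d.
rewrite !inE => /eqP dz.
have [] := @delv_attached x y d.1 d.2; first by rewrite dz.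
by rewrite dz => -[->].
Qed.

End CubicGraph.

Section Unsuppress.
Variables (V E : finType) (G : graph V E) (x y : V) (e f : E) (se sf : bool).
Hypotheses (ex : G e se = x) (fx : G f sf = x) (ef : e != f).

Let suppressed := suppress_att (as_mpole G) (e, se) (f, sf).

(* Suppression re-attaches the end (e, se) to the far end of f, so every end of f
   is represented by (e, se). *)
Definition reroute (d : E * bool) : E * bool := if d.1 == f then (e, se) else d.

Lemma far_end_f (b : bool) : G f b != x -> b = ~~ sf.
Proof. by move=> fb; apply: neq_negb; apply: contraNneq fb => ->; rewrite fx. Qed.

Lemma reroute_att (d : E * bool) :
  G d.1 d.2 != x -> suppressed (reroute d).1 (reroute d).2 = Some (G d.1 d.2).
Proof.
case: d => a b /= ax; rewrite /reroute /suppressed /suppress_att /=.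
case: (eqVneq a f) => [af | af] /=.
  by subst a; rewrite eqxx (far_end_f ax).
by case: eqP => // -[ae bs]; rewrite ae bs ex eqxx in ax.
Qed.

Lemma reroute_inj (d d' : E * bool) :
  G d.1 d.2 != x -> G d'.1 d'.2 != x -> reroute d = reroute d' -> d = d'.
Proof.
case: d d' => a b [a' b'] /= ax ax'; rewrite /reroute /=.
case: (eqVneq a f) => [af | af]; case: (eqVneq a' f) => [af' | af'] //=.
- by subst a a'; rewrite (far_end_f ax) (far_end_f ax').
- by case=> ae bs; rewrite -ae -bs ex eqxx in ax'.
- by case=> ae bs; rewrite ae bs ex eqxx in ax.
Qed.

Lemma colouring_unsuppress (A : {set E}) (c : E -> 'I_3) :
  e \in A -> colouring suppressed (suppress_set A (f, sf)) c ->
  colouring (delv G x y) A [eta c with f |-> c e].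
Proof.
move=> eA col d1 d2 d12 d1A d2A att1 att12.
have att2 : delv G x y d2.1 d2.2 != None by rewrite -att12.
have [att1G d1x _] := delv_attached att1.
have [att2G d2x _] := delv_attached att2.
have colour_reroute d : (if d.1 == f then c e else c d.1) = c (reroute d).1.
  by case: d => a b; rewrite /reroute /=; case: eqP.
have reroute_in d : d.1 \in A -> (reroute d).1 \in suppress_set A (f, sf).
  case: d => a b /= aA; rewrite /reroute /suppress_set /=.
  by case: eqVneq => [_ | af]; rewrite !inE /= ?ef ?af.
rewrite /= !colour_reroute.
apply: (col (reroute d1) (reroute d2)); rewrite ?reroute_in //.
- exact: contra_neq (reroute_inj d1x d2x) d12.
- by rewrite reroute_att.
- by rewrite !reroute_att // -att1G -att2G.
Qed.

End Unsuppress.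

Lemma essential_colouring_delv (V E : finType) (G : graph V E) (x y : V)
    (g h e f : E) (t se sf : bool) :
  essential G g h -> ends G x = [set (e, se); (f, sf); (g, t)] -> e != f ->
  [/\ e != g, e != h, f != g & f != h] ->
  exists2 c : E -> 'I_3, colouring (delv G x y) (setT :\ g :\ h) c & c e = c f.
Proof.
move=> [_ _ supp] xends ef [eg eh fg fh].
have end_x d : (G d.1 d.2 == x) = (d \in [set (e, se); (f, sf); (g, t)]).
  by rewrite -xends inE.
have ex : G e se = x by apply/eqP; rewrite (end_x (e, se)) !inE eqxx.
have fx : G f sf = x by apply/eqP; rewrite (end_x (f, sf)) !inE eqxx orbT.
have eA : e \in setT :\ g :\ h by rewrite !inE eh eg.
have fA : f \in setT :\ g :\ h by rewrite !inE fh fg.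
have ne : (e, se) != (f, sf) by apply: contra_neq ef; case.
have val : valency (as_mpole G) (setT :\ g :\ h) x = 2.
  transitivity #|[set (e, se); (f, sf)]|; last by rewrite cards2 ne.
  apply: eq_card => -[a b]; rewrite !inE andbT.
  rewrite -[_ == Some x]/(G a b == x) (end_x (a, b)) !inE.
  case: (eqVneq (a, b) (e, se)) => [[-> _] | _]; first by rewrite eh eg.
  case: (eqVneq (a, b) (f, sf)) => [[-> _] | _]; first by rewrite fh fg.
  by case: (eqVneq (a, b) (g, t)) => [[-> _] | _]; rewrite ?eqxx ?andbF.
have [c col] := supp x (e, se) (f, sf) val ne eA fA ex fx.
exists [eta c with f |-> c e]; first exact: colouring_unsuppress col.
by rewrite /= eqxx (negbTE ef).
Qed.

Theorem lemma14 (V E : finType) (G : graph V E) (u w v x y : V) :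
  snark G -> path2 G u w v ->
  (x = u \/ x = v) -> in_negator u w v y ->
  (forall e : E, incident G e x -> exists f : E, incident G f y /\ essential G e f) ->
  forall e' f' : E, e' != f' -> dangling_from G x y e' -> dangling_from G x y f' ->
  exists c : E -> 'I_3, colouring (delv G x y) setT c /\ c e' = c f'.
Proof.
move=> [_ [cub _]] _ x_uv [yu _ yv] partner e f ef dang_e dang_f.
have xy : x != y by case: x_uv => ->; rewrite eq_sym.
have [se [ex ex' _]] := dang_e; have [sf [fx fx' _]] := dang_f.
have ne : (e, se) != (f, sf) by apply: contra_neq ef; case.
have [[g t] g_new xends] := cubic_third_end cub ne ex fx.
have : (g, t) \in ends G x by rewrite xends !inE eqxx !orbT.
rewrite inE => /eqP gx.
rewrite !inE negb_or in g_new; case/andP: g_new => ge gf.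
have eg : e != g by rewrite eq_sym (end_edge_neq gx ex' ge).
have fg : f != g by rewrite eq_sym (end_edge_neq gx fx' gf).
have [h [[b hy] ess]] := partner g (ex_intro _ t gx).
have not_at_y d : dangling_from G x y d -> d != h.
  move=> dang_d; apply/eqP => dh.
  by apply: (dangling_from_not_incident xy dang_d); exists b; rewrite dh.
have [eh fh] := (not_at_y e dang_e, not_at_y f dang_f).
have [c col ce] := essential_colouring_delv y ess xends ef (And4 eg eh fg fh).
have gt : delv G x y g t = None by rewrite /delv gx eqxx.
have hb : delv G x y h b = None by rewrite /delv hy eqxx orbT.
have [gh _ _] := ess.
have [c' [col' c'c]] := colouring_extend_free_ends (subcubic_delv x y cub) gh col gt hb.
by exists c'; rewrite !c'c.
Qed.
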